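(* Let $j\neq k$ be jobs with $\sigma_j<\sigma_k$ such that $(j,k)$ is not a red pair. Then, in the schedule produced by $1$-SORT, \[ D(j,k)\le\max\left\{\frac{2\mu+1}{\mu+1},\,1+\nu\right\}\cdot D^*(j,k). \]
   Context: Setting: single machine, jobs $J=\{1,\dots,n\}$, each job $j$ with test time $t_j\ge0$ and processing time $p_j\ge0$ (revealed only when the test is executed); each job's test must be executed before its processing part, which may start any time after the test; operations are non-preemptive and the machine does one at a time. $\sigma_j=t_j+p_j$, $m_j=\max\{t_j,p_j\}$. Standing assumption (general position): no two of the $3n$ numbers $t_1,\dots,t_n,p_1,\dots,p_n,\sigma_1,\dots,\sigma_n$ are equal. Algorithm $1$-SORT: keep a priority queue of available operations, initially the test of every job $j$ with priority $t_j$; repeatedly remove a minimum-priority operation and execute it immediately; after executing the test of $j$, insert the processing part of $j$ with priority $p_j$. For a schedule and distinct jobs $j,k$, let $d_{k,j}$ be the total amount of time during which operations (test and/or processing part) of $k$ are executed before the completion time of $j$, and $D(j,k)=d_{j,k}+d_{k,j}$, evaluated for the $1$-SORT schedule. Let $D^*(j,k)=\min\{\sigma_j,\sigma_k\}$ (the corresponding quantity in an optimal schedule). Fix constants $\mu>1$ and $0<\nu<1$ with $\mu\nu>1$ and $1+\frac1\mu\le\nu+\nu^2$. A job $j$ is imbalanced if $m_j\ge\mu\min\{t_j,p_j\}$. For distinct jobs $j,k$, the ordered pair $(j,k)$ is a red pair if $j$ is imbalanced, $m_j\ge t_k\ge\nu m_j$, and $p_k\ge\nu t_k$. *)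

From HB Require Import structures.
From mathcomp Require Import all_boot all_order all_algebra.
Set Implicit Arguments. Unset Strict Implicit. Unset Printing Implicit Defensive.
Import Order.TTheory GRing.Theory Num.Theory.
Local Open Scope ring_scope.

Section OneSort.
Variables (R : realFieldType) (n : nat) (t p : 'I_n -> R).

(* An operation: (j, false) = test of job j, (j, true) = processing part of j. *)
Definition op := ('I_n * bool)%type.

(* Length of an operation; in 1-SORT it is also its priority. *)
Definition op_len (o : op) : R := if o.2 then p o.1 else t o.1.

Definition sigma (j : 'I_n) : R := t j + p j.
Definition mj (j : 'I_n) : R := Num.max (t j) (p j).

Definition argmin_op (o : op) (s : seq op) : op :=
  foldl (fun a b => if op_len b < op_len a then b else a) o s.

(* One step of 1-SORT: state = (priority queue, operations executed so far,
   in execution order). *)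
Definition sort_step (st : seq op * seq op) : seq op * seq op :=
  let: (q, sched) := st in
  match q with
  | [::] => st
  | o :: q' =>
      let m := argmin_op o q' in
      (rem m q ++ (if m.2 then [::] else [:: (m.1, true)]), rcons sched m)
  end.

(* The sequence of operations executed by 1-SORT (each started immediately
   after the previous one, with no idle time). *)
Definition one_sort_schedule : seq op :=
  (iter (2 * n) sort_step ([seq (j, false) | j <- enum 'I_n], [::])).2.

(* d k j: total time during which operations of k are executed before the
   completion time of j (= end of the processing part of j).  Operations are
   non-preemptive and executed back-to-back, so these are exactly the
   operations of k preceding (j, true) in the execution order. *)
Definition dd (k j : 'I_n) : R :=
  let s := one_sort_schedule in
  \sum_(o <- take (index (j, true) s) s | o.1 == k) op_len o.

Definition DD (j k : 'I_n) : R := dd j k + dd k j.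

Definition Dstar (j k : 'I_n) : R := Num.min (sigma j) (sigma k).

(* General position: the 3n numbers t_i, p_i, sigma_i are pairwise distinct. *)
Definition num3 (c : 'I_3) (i : 'I_n) : R :=
  if nat_of_ord c == 0%N then t i else if nat_of_ord c == 1%N then p i else sigma i.

Definition general_position : Prop :=
  forall (c c' : 'I_3) (i i' : 'I_n), num3 c i = num3 c' i' -> c = c' /\ i = i'.

Definition imbalanced (mu : R) (j : 'I_n) : Prop :=
  mj j >= mu * Num.min (t j) (p j).

Definition red_pair (mu nu : R) (j k : 'I_n) : Prop :=
  [/\ j != k, imbalanced mu j, mj j >= t k, t k >= nu * mj j & p k >= nu * t k].

End OneSort.

From mathcomp Require Import all_boot all_order all_algebra.
From mathcomp Require Import lra.
Import Order.TTheory GRing.Theory Num.Theory.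
Set Implicit Arguments. Unset Strict Implicit. Unset Printing Implicit Defensive.
Local Open Scope ring_scope.

(* 1-SORT executes the operations in increasing order of the key t_i for tests
   and m_i for processing parts.  Indeed, inside the queue priorities agree
   with this order: a queued processing part with p_i < t_i would have key t_i,
   but then it would have been executed right after its test.  Hence the
   processing part of j is preceded by the test of k iff t_k < m_j and by the
   processing part of k iff m_k < m_j, which gives D(j,k) in closed form.  The
   bound follows by distinguishing whether j or k completes first: as (j,k) is
   not red, either j is balanced, which yields the ratio (2mu+1)/(mu+1), or a
   closeness condition between j and k fails, which yields 1+nu. *)

Lemma mem_take_index_pairwise (T : eqType) (r : rel T) (s : seq T) x y :
  (forall a b, r a b -> ~~ r b a) -> pairwise r s -> x \in s -> y \in s -> x != y ->
  (x \in take (index y s) s) = r x y.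
Proof.
move=> asym sorted_s x_s y_s ne; rewrite in_take //.
have ix : (index x s < size s)%N by rewrite index_mem.
have iy : (index y s < size s)%N by rewrite index_mem.
case: ltngtP => [lt | gt | e].
- by have := pairwiseP x sorted_s _ _ ix iy lt; rewrite !nth_index.
- have := pairwiseP x sorted_s _ _ iy ix gt; rewrite !nth_index //.
  by move/asym/negbTE.
- by move: (congr1 (nth x s) e); rewrite !nth_index // => exy; rewrite exy eqxx in ne.
Qed.

Section OneSortOrder.
Variables (R : realFieldType) (n : nat) (t p : 'I_n -> R).

Definition op_key (o : op n) : R := if o.2 then mj t p o.1 else t o.1.

(* Equal keys occur only for the test and the processing part of one job i
   with p_i <= t_i; the test is then executed first. *)
Definition op_lt (o o' : op n) : bool :=
  (op_key o < op_key o') || [&& op_key o == op_key o', ~~ o.2 & o'.2].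

Lemma t_le_mj i : t i <= mj t p i.
Proof. by rewrite le_max lexx. Qed.

Lemma mj_cases i : mj t p i = t i \/ mj t p i = p i.
Proof. by rewrite /mj; case: leP; [right | left]. Qed.

Lemma op_len_le_key o : op_len t p o <= op_key o.
Proof. by case: o => i [] //=; rewrite /op_len /op_key /= le_max lexx orbT. Qed.

Lemma op_lt_key_le o o' : op_lt o o' -> op_key o <= op_key o'.
Proof. by case/orP => [/ltW // | /and3P [/eqP -> _ _]]. Qed.

Lemma op_lt_irr o : op_lt o o = false.
Proof. by rewrite /op_lt ltxx eqxx; case: o.2. Qed.

Lemma op_lt_trans o1 o2 o3 : op_lt o1 o2 -> op_lt o2 o3 -> op_lt o1 o3.
Proof.
rewrite /op_lt => /orP [lt12 | /and3P [/eqP e12 _ b2]] /orP [lt23 | /and3P [/eqP e23 b2' b3]].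
- by rewrite (lt_trans lt12 lt23).
- by rewrite -e23 lt12.
- by rewrite e12 lt23.
- by rewrite b2 in b2'.
Qed.

Lemma op_lt_asym o o' : op_lt o o' -> op_lt o' o = false.
Proof. by move=> lt_oo'; apply/negP => /(op_lt_trans lt_oo'); rewrite op_lt_irr. Qed.

Lemma test_lt_proc i : op_lt (i, false) (i, true).
Proof. by rewrite /op_lt /op_key /= andbT orbC -le_eqVlt t_le_mj. Qed.

Lemma proc_lt_testF i : op_lt (i, true) (i, false) = false.
Proof. exact/op_lt_asym/test_lt_proc. Qed.

Hypothesis gp : general_position t p.

Lemma t_inj : injective t.
Proof. by move=> i i' /(@gp (@Ordinal 3 0 isT) (@Ordinal 3 0 isT)) []. Qed.

Lemma p_inj : injective p.
Proof. by move=> i i' /(@gp (@Ordinal 3 1 isT) (@Ordinal 3 1 isT)) []. Qed.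

Lemma t_neq_p i i' : t i != p i'.
Proof. by apply/eqP => /(@gp (@Ordinal 3 0 isT) (@Ordinal 3 1 isT)) []. Qed.

Lemma op_key_inj o o' : op_key o = op_key o' -> o.1 = o'.1.
Proof.
have tp i i' : t i = p i' -> i = i' by move/eqP; rewrite (negbTE (t_neq_p _ _)).
case: o o' => [i []] [i' []]; rewrite /op_key /=;
  do ?[case: (mj_cases i) => ->]; do ?[case: (mj_cases i') => ->];
  by [move/t_inj | move/p_inj | move/tp | move/esym/tp/esym].
Qed.

Lemma mj_inj : injective (mj t p).
Proof. by move=> i i' /(@op_key_inj (i, true) (i', true)). Qed.

Lemma op_lt_key o o' : o.1 != o'.1 -> op_lt o o' = (op_key o < op_key o').
Proof.
move=> ne; rewrite /op_lt; case: eqP => [/op_key_inj e | _]; last by rewrite orbF.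
by rewrite e eqxx in ne.
Qed.

Lemma op_lt_total o o' : o != o' -> op_lt o o' || op_lt o' o.
Proof.
case: (eqVneq o.1 o'.1) => [e1 | ne1] ne.
  case: o o' ne e1 => i [] [i' []] ne /= e; subst i'; rewrite ?eqxx // in ne.
  - by rewrite test_lt_proc orbT.
  - by rewrite test_lt_proc.
rewrite op_lt_key // op_lt_key 1?eq_sym //.
by case: ltgtP => // /op_key_inj e; rewrite e eqxx in ne1.
Qed.

Lemma argmin_opP o s :
  argmin_op t p o s \in o :: s /\
  forall x, x \in o :: s -> op_len t p (argmin_op t p o s) <= op_len t p x.
Proof.
rewrite /argmin_op; elim: s o => [|x s IH] o /=.
  by split => [|y]; rewrite mem_seq1 // => /eqP ->.
set o1 := if _ < _ then x else o.
have [o1_mem o1_min] := IH o1.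
have [o1_le_o o1_le_x] : op_len t p o1 <= op_len t p o /\ op_len t p o1 <= op_len t p x.
  by rewrite /o1; case: ltP => [/ltW|] ->.
split.
  move: o1_mem; rewrite inE => /orP [/eqP -> | res_s]; last by rewrite !inE res_s !orbT.
  by rewrite /o1; case: ifP; rewrite !inE eqxx ?orbT.
move=> y; rewrite !inE => /orP [/eqP -> | /orP [/eqP -> | y_s]].
- by apply: le_trans o1_le_o; apply: o1_min; rewrite inE eqxx.
- by apply: le_trans o1_le_x; apply: o1_min; rewrite inE eqxx.
- by apply: o1_min; rewrite inE y_s orbT.
Qed.

Definition queue_inv (q s : seq (op n)) : Prop :=
  [/\ uniq s, pairwise op_lt s,
      forall o o', o \in s -> o' \notin s -> op_lt o o', uniq q &
      forall o, (o \in q) = (o \notin s) && (~~ o.2 || ((o.1, false) \in s))].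

Lemma queue_inv_tested q s i : queue_inv q s -> (i, true) \in s -> (i, false) \in s.
Proof.
case=> _ _ prefix _ _ proc_s; apply/negPn/negP => /(prefix _ _ proc_s).
by rewrite proc_lt_testF.
Qed.

Lemma queue_len_mono q s o o' : queue_inv q s -> o \in q -> o' \in q ->
  op_lt o o' -> op_len t p o < op_len t p o'.
Proof.
case=> _ _ prefix _ mem_q o_q o'_q lt_oo'.
have o_new : o \notin s by move: o_q; rewrite mem_q => /andP [].
have key_lt : op_key o < op_key o'.
  case/orP: lt_oo' => // /and3P [/eqP /op_key_inj e1 o_test o'_proc].
  move: o'_q; rewrite mem_q o'_proc /= => /andP [_].
  by case: o {o_q} e1 o_test o_new => i [] //= <- _ /negbTE ->.
apply: le_lt_trans (op_len_le_key o) _.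
case: o' o'_q lt_oo' key_lt => i [] o'_q lt_oo' key_lt; last by [].
rewrite /op_len /=; suff <- : mj t p i = p i by [].
case: (leP (t i) (p i)) => [le_tp | lt_pt]; first exact: max_r.
(* otherwise the test of i, of key t i = m i, was executed before o *)
have tested : (i, false) \in s by move: o'_q; rewrite mem_q => /andP [].
have le_to : t i <= op_key o := op_lt_key_le (prefix _ _ tested o_new).
have mj_t : mj t p i = t i by apply: max_l; apply: ltW.
by move: key_lt; rewrite [op_key (i, true)]/op_key /= mj_t; lra.
Qed.

Lemma argmin_lt_pending o0 q s : queue_inv (o0 :: q) s ->
  forall o, o \notin s -> o != argmin_op t p o0 q -> op_lt (argmin_op t p o0 q) o.
Proof.
move=> inv; have [_ _ _ _ mem_q] := inv.
have [m_q m_min] := argmin_opP o0 q.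
set m := argmin_op t p o0 q in m_q m_min *.
have lt_queued o : o \in o0 :: q -> o != m -> op_lt m o.
  move=> o_q ne; case/orP: (op_lt_total ne) => [lt_om | //].
  by have := queue_len_mono inv o_q m_q lt_om; rewrite ltNge m_min.
move=> o o_new ne; case o_q: (o \in o0 :: q); first exact: lt_queued.
move: o_q; rewrite mem_q o_new /= => /negbT; rewrite negb_or negbK.
case/andP=> o_proc untested.
have test_q : (o.1, false) \in o0 :: q by rewrite mem_q untested.
have test_lt : op_lt (o.1, false) o.
  by case: o {o_new ne untested test_q} o_proc => i [] // _; apply: test_lt_proc.
case: (eqVneq (o.1, false) m) => [<- // | ne_test].
exact: op_lt_trans (lt_queued _ test_q ne_test) test_lt.
Qed.

Lemma queue_mem_step q s m : queue_inv q s -> m \in q ->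
  forall o, (o \in rem m q ++ (if m.2 then [::] else [:: (m.1, true)])) =
            (o \notin rcons s m) && (~~ o.2 || ((o.1, false) \in rcons s m)).
Proof.
move=> inv m_q [i b]; have [_ _ _ uq mem_q] := inv.
have m_new : m \notin s by move: m_q; rewrite mem_q => /andP [].
have tested := @queue_inv_tested _ _ i inv.
rewrite mem_cat (mem_rem_uniq _ uq) !mem_rcons !inE mem_q /=.
case: m m_new {m_q} => i' b' m_new.
case: b' m_new => m_new; rewrite /= ?inE !xpair_eqE.
all: case: (eqVneq i i') => [e | ne]; rewrite /= ?andbT ?andbF ?orbF; try subst i'.
all: case: b; case proc_s: ((i, true) \in s); case test_s: ((i, false) \in s) => //=.
all: try by rewrite test_s in m_new.
all: by move: (tested proc_s); rewrite test_s.
Qed.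

Lemma queue_inv_step o0 q s : queue_inv (o0 :: q) s ->
  queue_inv (sort_step t p (o0 :: q, s)).1 (sort_step t p (o0 :: q, s)).2.
Proof.
move=> inv; have [uniq_s sorted_s prefix uq mem_q] := inv.
rewrite /sort_step; cbv beta iota zeta delta [fst snd].
have [m_q _] := argmin_opP o0 q.
have m_first := argmin_lt_pending inv.
have mem_q' := queue_mem_step inv m_q.
move: (argmin_op t p o0 q) m_q m_first mem_q' => m m_q m_first mem_q'.
have m_new : m \notin s by move: m_q; rewrite mem_q => /andP [].
split => //.
- by rewrite rcons_uniq m_new.
- by rewrite pairwise_rcons sorted_s andbT; apply/allP => o o_s; apply: prefix.
- move=> o o'; rewrite mem_rcons inE mem_rcons inE negb_or.
  by case/orP=> [/eqP -> | o_s] /andP [ne o'_new]; [apply: m_first | apply: prefix].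
- case: m {m_first mem_q'} m_q m_new => i [] m_q m_new; rewrite cat_uniq rem_uniq //.
  have : (i, true) \notin rem (i, false) (o0 :: q).
    by apply/negP => /mem_rem; rewrite mem_q /= (negbTE m_new) andbF.
  by rewrite /= orbF andbT.
Qed.

Lemma queue_inv_init : queue_inv [seq (j, false) | j <- enum 'I_n] [::].
Proof.
split => //.
- by rewrite map_inj_uniq ?enum_uniq // => i i' [].
- move=> [i []] /=; first by apply/mapP => [[j _]].
  by apply/mapP; exists i; rewrite ?mem_enum.
Qed.

Lemma queue_inv_nil s : queue_inv [::] s -> forall o, o \in s.
Proof.
case=> _ _ _ _ mem_q o; apply/negPn/negP => o_new.
have := mem_q (o.1, false); rewrite in_nil /= andbT => /esym/negbFE test_s.
by have := mem_q o; rewrite in_nil o_new test_s orbT.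
Qed.

Definition one_sort_state (k : nat) :=
  iter k (sort_step t p) ([seq (j, false) | j <- enum 'I_n], [::]).

Lemma one_sort_state_inv k :
  queue_inv (one_sort_state k).1 (one_sort_state k).2 /\
  (size (one_sort_state k).2 = k \/ forall o, o \in (one_sort_state k).2).
Proof.
elim: k => [|k [inv progress]] /=; first by split; [exact: queue_inv_init | left].
rewrite -/(one_sort_state k); case: (one_sort_state k) inv progress => [[|o0 q] s] /= inv progress.
  by split => //; right; apply: queue_inv_nil.
split; first exact: queue_inv_step.
case: progress => [size_s | all_s]; first by left; rewrite size_rcons size_s.
by right => o; rewrite mem_rcons inE all_s orbT.
Qed.

Lemma one_sort_scheduleP :
  [/\ uniq (one_sort_schedule t p), pairwise op_lt (one_sort_schedule t p) &
      forall o, o \in one_sort_schedule t p].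
Proof.
have [[uniq_s sorted_s _ _ _] progress] := one_sort_state_inv (2 * n).
split => //; case: progress => // size_s o; apply/negPn/negP => o_new.
have : (size (o :: one_sort_schedule t p) <= #|{: op n}|)%N.
  by rewrite cardE; apply: uniq_leq_size; rewrite /= ?o_new // => x; rewrite mem_enum.
by rewrite /= /one_sort_schedule size_s card_prod card_ord card_bool mulnC ltnn.
Qed.

Lemma dd_eq k j : k != j ->
  dd t p k j = (if t k < mj t p j then t k else 0) + (if mj t p k < mj t p j then p k else 0).
Proof.
move=> kj; have [uniq_s sorted_s all_s] := one_sort_scheduleP.
set s := one_sort_schedule t p.
have before b : ((k, b) \in take (index (j, true) s) s) = op_lt (k, b) (j, true).
  apply: mem_take_index_pairwise => //; first by move=> o o' /op_lt_asym ->.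
  by rewrite xpair_eqE (negbTE kj).
rewrite /dd -/s big_mkcond big_uniq ?take_uniq //= big_mkcond /=.
rewrite (bigD1 (k, false)) //= (bigD1 (k, true)) //=.
set rest := \sum_(i | _) _; have -> : rest = 0.
  apply: big1 => [[i b]] /andP [ne_t ne_p]; case: ifP => // _; case: eqP => //= ik.
  by subst i; case: b ne_t ne_p; rewrite eqxx.
rewrite addr0 !before !op_lt_key //= (eqxx k) //.
by apply/eqP => -[].
Qed.

End OneSortOrder.

Section PairCost.
Variables (R : realFieldType) (a b x y mu nu : R).

Local Notation M := (Num.max a b).
Local Notation m := (Num.min a b).
Local Notation K := (Num.max x y).
Local Notation C := (Num.max ((2 * mu + 1) / (mu + 1)) (1 + nu)).
Local Notation not_red := [\/ M < mu * m, M < x, x < nu * M | y < nu * x].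

Lemma le_ratio_nu z : 0 <= a + b -> z <= (1 + nu) * (a + b) -> z <= C * (a + b).
Proof.
move=> ab_ge0 le_z; apply: (le_trans le_z); apply: ler_wpM2r => //.
by rewrite le_max lexx orbT.
Qed.

Lemma le_ratio_balanced z : 0 <= a + b -> 0 < mu + 1 ->
  M < mu * m -> z <= m + 2 * M -> z <= C * (a + b).
Proof.
move=> ab_ge0 mu1_gt0 bal le_z; apply: (le_trans le_z).
apply: (@le_trans _ _ ((2 * mu + 1) / (mu + 1) * (a + b))); last first.
  by apply: ler_wpM2r => //; rewrite le_max lexx.
by rewrite mulrAC ler_pdivlMr // -(addr_min_max a b); nra.
Qed.

Lemma max_le_add : 0 <= a -> 0 <= b -> M <= a + b.
Proof. by move=> a_ge0 b_ge0; rewrite ge_max; apply/andP; split; lra. Qed.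

Lemma pair_cost_j_first :
  0 <= a -> 0 <= b -> 0 <= x -> 1 < mu -> 0 < nu -> nu < 1 -> not_red ->
  M < K -> a + b + (if x < M then x else 0) <= C * (a + b).
Proof.
move=> a_ge0 b_ge0 x_ge0 mu_gt1 nu_gt0 nu_lt1 not_red MK.
have ab_ge0 : 0 <= a + b by lra.
have nuM_le : nu * M <= nu * (a + b) by apply: ler_wpM2l; [lra | exact: max_le_add].
case: ifP => [xM|_]; last by apply: le_ratio_nu => //; nra.
case: not_red => [bal | Mx | x_small | y_small].
- by apply: le_ratio_balanced bal _ => //; [lra | have := addr_min_max a b; lra].
- lra.
- by apply: le_ratio_nu => //; lra.
- have yx : y < x by nra.
  by move: MK; rewrite (max_l (ltW yx)); lra.
Qed.

Lemma pair_cost_k_first :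
  0 <= a -> 0 <= b -> 1 < mu -> 0 < nu -> not_red ->
  K < M -> (if a < K then a else 0) + (x + y) <= C * (a + b).
Proof.
move=> a_ge0 b_ge0 mu_gt1 nu_gt0 not_red KM.
have ab_ge0 : 0 <= a + b by lra.
have xK : x <= K by rewrite le_max lexx.
have yK : y <= K by rewrite le_max lexx orbT.
have M_le := max_le_add a_ge0 b_ge0.
have head_le z : z <= K -> (if a < K then a else 0) + z <= a + b.
  case: ifP => aK zK; last by move/negbT: aK; rewrite -leNgt; lra.
  case: (leP a b) => ab; last by move: KM; rewrite (max_l (ltW ab)); lra.
  by move: KM; rewrite (max_r ab); lra.
have head_le_min : (if a < K then a else 0) <= m.
  rewrite le_min; case: ifP => aK; last by rewrite a_ge0.
  by move: KM; case: (leP a b) => ab; rewrite ?(max_r ab) ?(max_l (ltW ab)); lra.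
case: not_red => [bal | Mx | x_small | y_small].
- by apply: le_ratio_balanced bal _ => //; lra.
- lra.
- apply: le_ratio_nu => //; have := head_le y yK.
  have : nu * M <= nu * (a + b) by apply: ler_wpM2l => //; lra.
  lra.
- apply: le_ratio_nu => //; have := head_le x xK.
  have : nu * x <= nu * (a + b) by apply: ler_wpM2l => //; lra.
  lra.
Qed.

Lemma pair_cost_le :
  0 <= a -> 0 <= b -> 0 <= x -> 1 < mu -> 0 < nu -> nu < 1 -> not_red -> M != K ->
  (if a < K then a else 0) + (if M < K then b else 0)
  + ((if x < M then x else 0) + (if K < M then y else 0)) <= C * (a + b).
Proof.
move=> a_ge0 b_ge0 x_ge0 mu_gt1 nu_gt0 nu_lt1 not_red.
case: (ltgtP M K) => // [MK|KM] _.
- have aK : a < K by apply: le_lt_trans MK; rewrite le_max lexx.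
  by rewrite aK addr0; apply: pair_cost_j_first.
- have xM : x < M by apply: le_lt_trans KM; rewrite le_max lexx.
  by rewrite xM addr0; apply: pair_cost_k_first.
Qed.

End PairCost.

Lemma not_red_pair (R : realFieldType) (n : nat) (t p : 'I_n -> R) (mu nu : R) (j k : 'I_n) :
  j != k -> ~ red_pair t p mu nu j k ->
  [\/ mj t p j < mu * Num.min (t j) (p j), mj t p j < t k,
      t k < nu * mj t p j | p k < nu * t k].
Proof.
move=> jk not_red; apply/or4P/negPn/negP.
by rewrite !negb_or -!leNgt => /and4P [imb tk_le le_tk le_pk]; apply: not_red.
Qed.

Theorem mainTheorem4 (R : realFieldType) (n : nat) (t p : 'I_n -> R)
  (mu nu : R) (j k : 'I_n) :
  (forall i, 0 <= t i) -> (forall i, 0 <= p i) ->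
  general_position t p ->
  1 < mu -> 0 < nu -> nu < 1 -> 1 < mu * nu -> 1 + mu^-1 <= nu + nu ^+ 2 ->
  j != k -> sigma t p j < sigma t p k ->
  ~ red_pair t p mu nu j k ->
  DD t p j k <= Num.max ((2 * mu + 1) / (mu + 1)) (1 + nu) * Dstar t p j k.
Proof.
move=> t_ge0 p_ge0 gp mu_gt1 nu_gt0 nu_lt1 _ _ jk lt_sigma not_red.
have kj : k != j by rewrite eq_sym.
rewrite /DD (dd_eq gp jk) (dd_eq gp kj) /Dstar (min_idPl (ltW lt_sigma)).
apply: pair_cost_le => //; first exact: not_red_pair.
by apply/eqP => /(mj_inj gp) ejk; rewrite ejk eqxx in jk.
Qed.
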